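(* Let $A=(a_{ij})_{i,j=1}^n$ be a (row) stochastic matrix, i.e. $a_{ij}\ge 0$ and $\sum_{j=1}^n a_{ij}=1$ for every $i$. Then \[ \operatorname{Per}(A)\ \le\ 2^n\cdot\prod_{i,j=1}^n (1-a_{ij})^{1-a_{ij}}. \]
   Context: $\operatorname{Per}(A)=\sum_{\sigma\in S_n}\prod_{i=1}^n a_{i\sigma(i)}$ is the permanent. Convention: $0^0=1$. *)

From Stdlib Require Import Reals.
From mathcomp Require Import all_boot all_fingroup.
Set Implicit Arguments.
Unset Strict Implicit.

Definition Rsum {T : Type} (s : seq T) (F : T -> R) : R :=
  foldr Rplus R0 (map F s).
Definition Rprod {T : Type} (s : seq T) (F : T -> R) : R :=
  foldr Rmult R1 (map F s).

(* t^t with the convention 0^0 = 1 (only used for t >= 0) *)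
Definition selfpow (t : R) : R :=
  if Req_EM_T t R0 then R1 else Rpower t t.

Definition Per (n : nat) (A : 'I_n -> 'I_n -> R) : R :=
  Rsum (enum 'S_n) (fun s : 'S_n => Rprod (enum 'I_n) (fun i => A i (s i))).

Definition row_stochastic (n : nat) (A : 'I_n -> 'I_n -> R) : Prop :=
  (forall i j, Rle R0 (A i j)) /\
  (forall i, Rsum (enum 'I_n) (fun j => A i j) = R1).

From Stdlib Require Import Reals.
From mathcomp Require Import all_boot all_order all_fingroup all_algebra.
From mathcomp Require Import Rstruct ring lra.
Import Order.TTheory GRing.Theory Num.Theory.

Set Implicit Arguments.
Unset Strict Implicit.
Unset Printing Implicit Defensive.

(* Induct on a stronger statement: if A >= 0 and every entry of row i is at
   most M i, then Per A <= prod_i c_i with c_i = (r_i + M_i) / 2, r_i the i-th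
   row sum.  Put x_lk = A_lk / (r_l + M_l) <= 1/2.  Expanding along row i and
   using the induction hypothesis on the minors bounds Per A by
   (prod_{l <> i} c_l) * S_i, where S_i = sum_k A_ik prod_{l <> i} (1 - x_lk).
   Now sum_i S_i / c_i = 2 sum_k P(exactly one success among independent
   trials with probabilities x_lk) <= n, so S_i <= c_i for some row i.
   For a stochastic row with entries a_k, taking M_i = a_j the largest entry,
   (1 + a_j) / 2 <= 2 prod_k (1 - a_k)^(1 - a_k) follows from
   u^u >= e^(u - 1) for the entries k <> j and u^u e^(-u) >= (2 - u) / 4 at
   u = 1 - a_j. *)

Local Open Scope ring_scope.

Section LiftPerm.
Variables (T : Type) (idx : T) (op : Monoid.com_law idx).

Lemma big_lift_perm n (i0 j0 : 'I_n.+1) (F : 'S_n.+1 -> T) :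
  \big[op/idx]_(s : 'S_n.+1 | s i0 == j0) F s
    = \big[op/idx]_(t : 'S_n) F (lift_perm i0 j0 t).
Proof.
rewrite (reindex (lift_perm i0 j0)); last first.
  pose ulsf i (s : 'S_n.+1) k := odflt k (unlift (s i) (s (lift i k))).
  have ulsfK i (s : 'S_n.+1) k : lift (s i) (ulsf i s k) = s (lift i k).
    rewrite /ulsf; have := neq_lift i k.
    by rewrite -(can_eq (permK s)) => /unlift_some[] ? ? ->.
  have inj_ulsf : injective (ulsf i0 _).
    move=> s; apply: can_inj (ulsf (s i0) s^-1%g) _ => k'.
    by rewrite {1}/ulsf ulsfK !permK liftK.
  exists (fun s => perm (inj_ulsf s)) => [s _ | s].
    by apply/permP=> k'; rewrite permE /ulsf lift_perm_lift lift_perm_id liftK.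
  move/(s _ =P _) => si0; apply/permP=> k.
  case: (unliftP i0 k) => [k'|] ->; rewrite ?lift_perm_id //.
  by rewrite lift_perm_lift -si0 permE ulsfK.
by apply: eq_bigl => t; rewrite lift_perm_id eqxx.
Qed.

Lemma big_neq_lift n (i : 'I_n.+1) (F : 'I_n.+1 -> T) :
  \big[op/idx]_(l | l != i) F l = \big[op/idx]_(l' < n) F (lift i l').
Proof.
rewrite big_mkcond (bigD1_ord i) //= eqxx Monoid.mul1m.
by apply: eq_bigr => l' _; rewrite eq_sym neq_lift.
Qed.

End LiftPerm.

Section Permanent.
Variable R : comPzSemiRingType.

Definition permanent n (A : 'M[R]_n) : R := \sum_(s : 'S_n) \prod_i A i (s i).

Lemma permanent0 (A : 'M[R]_0) : permanent A = 1.
Proof.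
rewrite /permanent (eq_bigr (fun=> 1)) => [|s _]; last by rewrite big_ord0.
by rewrite sumr_const card_Sn.
Qed.

Lemma expand_permanent_row n (A : 'M[R]_n.+1) i0 :
  permanent A = \sum_j A i0 j * permanent (row' i0 (col' j A)).
Proof.
rewrite /permanent (partition_big (fun s : 'S_n.+1 => s i0) xpredT) //=.
apply: eq_bigr => j0 _; rewrite big_lift_perm big_distrr /=.
apply: eq_bigr => t _; rewrite (bigD1_ord i0) //= lift_perm_id; congr (_ * _).
by apply: eq_bigr => k _; rewrite lift_perm_lift !mxE.
Qed.

End Permanent.

Section RealField.
Variable R : realFieldType.

(* For independent trials with success probabilities [y l], the two quantities
   are the probabilities of no success and of exactly one success. *)
Lemma exactly_one_bounds (I : eqType) (r : seq I) (y : I -> R) :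
  uniq r -> (forall i, 0 <= y i <= 1 / 2) ->
  [/\ 0 <= \prod_(l <- r) (1 - y l),
      0 <= \sum_(i <- r) y i * \prod_(l <- r | l != i) (1 - y l),
      \prod_(l <- r) (1 - y l)
        + \sum_(i <- r) y i * \prod_(l <- r | l != i) (1 - y l) <= 1
    & \sum_(i <- r) y i * \prod_(l <- r | l != i) (1 - y l) <= 1 / 2].
Proof.
move=> + y_bnd; elim: r => [|a r IHr] /=; first by rewrite !big_nil; split; lra.
case/andP=> a_notin_r /IHr[p0_ge0 p1_ge0 p01_le1 p1_le]; rewrite !big_cons eqxx /=.
have -> : \prod_(l <- r | l != a) (1 - y l) = \prod_(l <- r) (1 - y l).
  rewrite big_seq_cond [RHS]big_seq; apply: eq_bigl => l.
  by rewrite andb_idr // => l_r; apply: contraNneq a_notin_r => <-.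
have -> : \sum_(i <- r) y i * \prod_(l <- a :: r | l != i) (1 - y l)
        = (1 - y a) * \sum_(i <- r) y i * \prod_(l <- r | l != i) (1 - y l).
  rewrite big_distrr /= [LHS]big_seq [RHS]big_seq; apply: eq_bigr => i i_r.
  rewrite big_cons; case: eqVneq i_r a_notin_r => [-> -> //|_ _ _].
  by rewrite mulrCA.
move: (y_bnd a) p0_ge0 p1_ge0 p01_le1 p1_le => /andP[ya_ge0 ya_le].
set p0 := \prod_(l <- r) _; set p1 := \sum_(i <- r) _.
by split; nra.
Qed.

Lemma sum_exactly_one_le_half (I : finType) (y : I -> R) :
  (forall i, 0 <= y i <= 1 / 2) ->
  \sum_i y i * \prod_(l | l != i) (1 - y l) <= 1 / 2.
Proof. by move=> y_bnd; case: (exactly_one_bounds (index_enum_uniq I) y_bnd). Qed.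

Lemma exists_le_of_sum_div_le (I : finType) (i0 : I) (S c : I -> R) :
  (forall i, 0 < c i) -> \sum_i S i / c i <= #|I|%:R -> exists i, S i <= c i.
Proof.
move=> c_gt0 sum_le; apply/existsP; apply: contraLR sum_le => /existsPn S_gt.
rewrite -ltNge -sum1_card natr_sum; apply: ltr_sum => [|i _].
  by apply/hasP; exists i0; rewrite ?mem_index_enum ?inE.
by rewrite ltr_pdivlMr // mul1r ltNge S_gt.
Qed.

Lemma exists_row_expansion_le n (A : 'M[R]_n.+1) (M : 'I_n.+1 -> R) :
  (forall i k, 0 <= A i k) -> (forall i k, A i k <= M i) ->
  (forall i, 0 < \sum_k A i k) ->
  exists i, \sum_k A i k * \prod_(l | l != i) (1 - A l k / (\sum_k' A l k' + M l))
              <= (\sum_k A i k + M i) / 2.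
Proof.
move=> A_ge0 A_le_M s_gt0.
have d_gt0 l : 0 < \sum_k A l k + M l.
  by have := A_ge0 l l; have := A_le_M l l; have := s_gt0 l; lra.
have A_le_s l k : A l k <= \sum_k' A l k' by rewrite (bigD1 k) //= lerDl sumr_ge0.
pose x l k := A l k / (\sum_k' A l k' + M l).
have x_bnd l k : 0 <= x l k <= 1 / 2.
  rewrite divr_ge0 ?ler_pdivrMr ?(ltW (d_gt0 l)) //=.
  by have := A_le_s l k; have := A_le_M l k; lra.
apply: (exists_le_of_sum_div_le ord0) => [i|]; first by have := d_gt0 i; lra.
have ratio i :
    (\sum_k A i k * \prod_(l | l != i) (1 - x l k)) / ((\sum_k A i k + M i) / 2)
      = \sum_k 2 * (x i k * \prod_(l | l != i) (1 - x l k)).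
  by rewrite mulr_suml; apply: eq_bigr => k _; rewrite /x; field; rewrite gt_eqF.
rewrite (eq_bigr _ (fun i _ => ratio i)) exchange_big /= -sum1_card natr_sum.
apply: ler_sum => k _.
by rewrite -mulr_sumr; have := sum_exactly_one_le_half (x_bnd ^~ k); lra.
Qed.

Lemma permanent_le_prod_avg n (A : 'M[R]_n) (M : 'I_n -> R) :
  (forall i k, 0 <= A i k) -> (forall i k, A i k <= M i) ->
  permanent A <= \prod_i ((\sum_k A i k + M i) / 2).
Proof.
elim: n A M => [|n IHn] A M A_ge0 A_le_M; first by rewrite permanent0 big_ord0.
have s_ge0 i : 0 <= \sum_k A i k by apply: sumr_ge0.
have c_ge0 i : 0 <= (\sum_k A i k + M i) / 2.
  by have := s_ge0 i; have := A_ge0 i i; have := A_le_M i i; lra.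
have [/existsP[i /eqP s0] | /existsPn s_neq0] := boolP [exists i, \sum_k A i k == 0].
  rewrite (expand_permanent_row A i) big1 ?prodr_ge0 // => k _.
  by rewrite (psumr_eq0P (P := xpredT) (fun k _ => A_ge0 i k) s0) ?mul0r.
have s_gt0 i : 0 < \sum_k A i k by rewrite lt0r s_neq0 s_ge0.
have [i Si] := exists_row_expansion_le A_ge0 A_le_M s_gt0.
rewrite (expand_permanent_row A i) [X in _ <= X](bigD1 i) //= [X in _ <= X]mulrC.
set c := fun l => (\sum_k A l k + M l) / 2.
set x := fun l k => A l k / (\sum_k' A l k' + M l).
have minor_le k :
    permanent (row' i (col' k A)) <= \prod_(l | l != i) (c l * (1 - x l k)).
  apply: le_trans (IHn _ (fun l' => M (lift i l')) _ _) _ => [a b|a b|]; rewrite ?mxE //.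
  rewrite big_neq_lift le_eqVlt; apply/orP; left; apply/eqP/eq_bigr => l' _.
  set l := lift i l'.
  have d_gt0 : 0 < \sum_k A l k + M l.
    by have := s_gt0 l; have := A_ge0 l k; have := A_le_M l k; lra.
  have sE : \sum_k0 A l k0 = A l k + \sum_k' A l (lift k k') by rewrite (bigD1_ord k).
  under eq_bigr do rewrite !mxE.
  by rewrite /c /x sE in d_gt0 *; field; rewrite gt_eqF.
apply: le_trans (_ : \sum_k A i k * \prod_(l | l != i) (c l * (1 - x l k)) <= _).
  by apply: ler_sum => k _; apply: ler_wpM2l.
have -> : \sum_k A i k * \prod_(l | l != i) (c l * (1 - x l k))
    = \prod_(l | l != i) c l * \sum_k A i k * \prod_(l | l != i) (1 - x l k).
  by rewrite big_distrr; apply: eq_bigr => k _; rewrite big_split mulrCA.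
by apply: ler_wpM2l; [apply: prodr_ge0 => l _; exact: c_ge0 | exact: Si].
Qed.

End RealField.

(* The argument scopes of [exp], [ln] and [selfpow] make terms written inside
   them use the Stdlib operations, convertible but not syntactically equal to
   the ring ones. *)
Local Definition RstdE :=
  (RplusE, RminusE, RmultE, RoppE, RdivE, RinvE, R0E, R1E).

Lemma ln_le_subr1 {v} : 0 < v -> ln v <= v - 1.
Proof.
move=> /RltP v_gt0; have /RleP := exp_ineq1_le (ln v).
by rewrite exp_ln // RplusE R1E; lra.
Qed.

Lemma subr1_le_mul_ln {u} : 0 < u -> u - 1 <= u * ln u.
Proof.
move=> u_gt0; have := @ln_le_subr1 u^-1; rewrite invr_gt0 => /(_ u_gt0).
rewrite -RinvE ln_Rinv; last exact/RltP.
rewrite RoppE RinvE => h.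
have := ler_wpM2l (ltW u_gt0) h.
by rewrite mulrBr mulfV ?gt_eqF // mulr1 mulrN; lra.
Qed.

Lemma selfpowE t : 0 < t -> selfpow t = exp (t * ln t).
Proof.
move=> t_gt0; rewrite /selfpow; case: Req_dec_T => // t0.
by rewrite t0 ltxx in t_gt0.
Qed.

Lemma selfpow0 : selfpow 0 = 1.
Proof. by rewrite /selfpow; case: Req_dec_T. Qed.

Lemma selfpow_ge0 t : 0 <= selfpow t.
Proof.
rewrite /selfpow; case: Req_dec_T => _ /=; first exact: ler01.
exact/RleP/Rlt_le/exp_pos.
Qed.

Lemma exp_le_exp {x y} : x <= y -> exp x <= exp y.
Proof.
rewrite le_eqVlt => /predU1P[-> // | /RltP/exp_increasing/RltP]; exact: ltW.
Qed.

Lemma expN_le_selfpow_subr a : 0 <= a <= 1 -> exp (- a) <= selfpow (1 - a).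
Proof.
move=> /andP[a_ge0 a_le1]; have [a1|a_lt1] := eqVneq a 1.
  rewrite a1 !RstdE subrr selfpow0 -[X in _ <= X]expR0.
  by apply: exp_le_exp; rewrite R0E; lra.
have u_gt0 : 0 < 1 - a by rewrite subr_gt0 lt_neqAle a_lt1.
rewrite selfpowE //; apply: exp_le_exp.
by have := subr1_le_mul_ln u_gt0; rewrite !RstdE; lra.
Qed.

Lemma ln2_gt_half : 1 / 2 < ln 2.
Proof. by have /RltP := ln_lt_2; rewrite -RinvE; lra. Qed.

Lemma selfpow_expN_ge t : 0 <= t <= 1 -> (2 - t) / 4 <= selfpow t * exp (- t).
Proof.
move=> /andP[t_ge0 t_le1]; have [->|t_neq0] := eqVneq t 0.
  by rewrite selfpow0 RoppE oppr0 expR0; lra.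
have t_gt0 : 0 < t by rewrite lt_neqAle eq_sym t_neq0.
rewrite selfpowE // expRD.
have ln2 := ln2_gt_half.
have ln2t : ln (2 * t) = ln 2 + ln t.
  by rewrite ln_mult //; [exact: Rlt_0_2 | exact/RltP].
have := @subr1_le_mul_ln (2 * t); rewrite pmulr_rgt0 // ln2t => /(_ t_gt0) key.
have [a aE] : exists a, a = - t / 2 - ln 2 by eexists.
have a_le : a <= t * ln t - t by rewrite aE; nra.
have exp_a2 : exp a * 2 = exp (a + ln 2) by rewrite -expRD exp_ln //; exact: Rlt_0_2.
have := exp_ineq1_le (a + ln 2) => /RleP; rewrite !RstdE => lin.
by have := exp_le_exp a_le; lra.
Qed.

Lemma stochastic_row_selfpow_bound n (a : 'I_n -> R) j :
  (forall k, 0 <= a k) -> \sum_k a k = 1 ->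
  (1 + a j) / 2 <= 2 * \prod_k selfpow (1 - a k).
Proof.
move=> a_ge0 a_sum.
have a_bnd k : 0 <= a k <= 1 by rewrite a_ge0 -a_sum (bigD1 k) //= lerDl sumr_ge0.
have rest : 1 - a j = \sum_(k | k != j) a k by rewrite -a_sum (bigD1 j) //= addrC addrK.
have others : exp (- (1 - a j)) <= \prod_(k | k != j) selfpow (1 - a k).
  rewrite !RstdE rest -sumrN.
  rewrite (big_morph _ (fun x y => esym (expRD x y)) expR0).
  apply: ler_prod => k _; rewrite expN_le_selfpow_subr // andbT.
  exact/RleP/Rlt_le/exp_pos.
have t_bnd : 0 <= 1 - a j <= 1.
  by have /andP[? ?] := a_bnd j; apply/andP; split; lra.
rewrite (bigD1 j) //=.
have := ler_wpM2l (selfpow_ge0 (1 - a j)) others.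
by have := selfpow_expN_ge t_bnd; lra.
Qed.

Lemma Rsum_enum (T : finType) (F : T -> R) : Rsum (enum T) F = \sum_x F x.
Proof.
by rewrite -big_enum; elim: (enum T) => [|x s IHs]; rewrite ?big_nil // big_cons -IHs.
Qed.

Lemma Rprod_enum (T : finType) (F : T -> R) : Rprod (enum T) F = \prod_x F x.
Proof.
by rewrite -big_enum; elim: (enum T) => [|x s IHs]; rewrite ?big_nil // big_cons -IHs.
Qed.

Lemma Per_permanent n (A : 'I_n -> 'I_n -> R) :
  Per A = permanent (\matrix_(i, j) A i j).
Proof.
rewrite /Per Rsum_enum; apply: eq_bigr => s _.
by rewrite Rprod_enum; apply: eq_bigr => i _; rewrite mxE.
Qed.

Theorem theorem1p3 (n : nat) (A : 'I_n -> 'I_n -> R) :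
  row_stochastic A ->
  Rle (Per A)
      (Rmult (pow (IZR 2) n)
         (Rprod (enum 'I_n)
            (fun i => Rprod (enum 'I_n) (fun j => selfpow (Rminus R1 (A i j)))))).
Proof.
case=> A_ge0 A_sum; apply/RleP.
pose B := \matrix_(i, j) A i j.
have B_ge0 i k : 0 <= B i k by rewrite mxE; apply/RleP.
have B_sum i : \sum_k B i k = 1.
  by rewrite -[RHS](A_sum i) Rsum_enum; apply: eq_bigr => k _; rewrite mxE.
pose jmax i := [arg max_(k > i) A i k]%O.
have B_le_max i k : B i k <= B i (jmax i).
  by rewrite !mxE /jmax; case: arg_maxP => // j _; apply.
rewrite Per_permanent RpowE Rprod_enum (eq_bigr _ (fun i _ => Rprod_enum _)).
apply: le_trans (permanent_le_prod_avg B_ge0 B_le_max) _.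
rewrite (_ : _ ^+ n = \prod_(i < n) 2); last by rewrite prodr_const card_ord.
rewrite -big_split /=.
apply: ler_prod => i _; rewrite B_sum; apply/andP; split.
  by have := B_ge0 i i; have := B_le_max i i; lra.
have := stochastic_row_selfpow_bound (jmax i) (B_ge0 i) (B_sum i).
by under eq_bigr do rewrite mxE.
Qed.
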